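(* Let $\mathcal{P}$ be a BMS channel and let $(C_i)_{i\ge1}$ be a sequence of binary codes with rates $(R_i)_{i\ge1}$ such that $\limsup_{i\to\infty}R_i<C(\mathcal{P})$ and such that a uniformly random codeword of $C_i$ has each coordinate marginally distributed as Bernoulli$(1/2)$. Let $P_e(C_i,\mathcal{P},j)$ be the probability that the maximum-likelihood decoder decodes coordinate $j$ of a uniformly random codeword of $C_i$ incorrectly given the channel outputs at all other coordinates, and assume $P_e(C_i,\mathcal{P},j)$ does not depend on $j$; denote it $P_e(C_i,\mathcal{P})$. Then there exists $c>0$ such that $P_e(C_i,\mathcal{P})<1/2-c$ for all sufficiently large $i$.
   Context: A binary code $C\subseteq\{0,1\}^n$ has rate $\log_2|C|/n$. A BMS channel is a conditional distribution $\mathcal{P}(y\mid x)$, $x\in\{0,1\}$, $y$ in a (finite or countable) output alphabet $\mathcal{Y}$, together with an involution $\sigma$ of $\mathcal{Y}$ with $\mathcal{P}(y\mid1)=\mathcal{P}(\sigma(y)\mid0)$; it acts independently on each coordinate. Its capacity is $C(\mathcal{P})=\frac12\sum_{x\in\{0,1\},y\in\mathcal{Y}}\mathcal{P}(y\mid x)\log_2\frac{\mathcal{P}(y\mid x)}{\mathcal{P}(y\mid0)/2+\mathcal{P}(y\mid1)/2}$. *)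

From HB Require Import structures.
From mathcomp Require Import all_boot all_order all_algebra.
From mathcomp Require Import all_classical all_reals all_analysis.
Set Implicit Arguments. Unset Strict Implicit. Unset Printing Implicit Defensive.
Import Order.TTheory GRing.Theory Num.Theory.
Local Open Scope classical_set_scope.
Local Open Scope ring_scope.

Definition log2 {R : realType} (x : R) : R := ln x / ln 2.

(* A BMS channel with countable (possibly finite) output alphabet Y:
   transition probabilities P x y = P(y | x), x : bool (false = 0, true = 1),
   together with an involution sigma with P(y|1) = P(sigma y|0). *)
Definition is_BMS {R : realType} {Y : countType} (P : bool -> Y -> R)
  (sigma : Y -> Y) : Prop :=
  (forall x y, 0 <= P x y) /\
  (forall x, (\esum_(y in [set: Y]) (P x y)%:E = 1)%E) /\
  (forall y, sigma (sigma y) = y) /\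
  (forall y, P true y = P false (sigma y)).

(* capacity C(P) = 1/2 sum_{x,y} P(y|x) log2 (P(y|x) / (P(y|0)/2 + P(y|1)/2)),
   the sum over x being done inside (the inner sum over x is nonnegative,
   so the sum over the countable set Y is a sum of nonnegative terms). *)
Definition capacity {R : realType} {Y : countType} (P : bool -> Y -> R) : \bar R :=
  (\esum_(y in [set: Y])
     ((1/2) * \sum_(x : bool)
        P x y * log2 (P x y / (P false y / 2 + P true y / 2)))%:E)%E.

Definition bcode (n : nat) := {set {ffun 'I_n -> bool}}.

Definition rate {R : realType} n (C : bcode n) : R := log2 (#|C|%:R) / n%:R.

Definition unif_marginals n (C : bcode n) : Prop :=
  forall j : 'I_n, (#|[set x in C | x j]| * 2 = #|C|)%N.

Definition others n (j : 'I_n) := {k : 'I_n | k != j}.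
Definition outs (Y : countType) n (j : 'I_n) := {ffun others j -> Y}.

(* joint probability P(X_j = b, Y_{-j} = y) for X uniform on C *)
Definition joint {R : realType} {Y : countType} (P : bool -> Y -> R) n
  (C : bcode n) (j : 'I_n) (b : bool) (y : outs Y j) : R :=
  (#|C|%:R)^-1 * \sum_(x in C | x j == b) \prod_(k : others j) P (x (val k)) (y k).

Definition marg {R : realType} n (C : bcode n) (j : 'I_n) (b : bool) : R :=
  #|[set x in C | x j == b]|%:R / #|C|%:R.

(* maximum-likelihood decoder of bit j from the other outputs:
   argmax_b P(y | X_j = b) (ties broken towards 0; the error probability
   does not depend on the tie-breaking rule) *)
Definition ML_dec {R : realType} {Y : countType} (P : bool -> Y -> R) n
  (C : bcode n) (j : 'I_n) (y : outs Y j) : bool :=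
  @joint R Y P n C j false y / @marg R n C j false < @joint R Y P n C j true y / @marg R n C j true.

Definition Pe {R : realType} {Y : countType} (P : bool -> Y -> R) n
  (C : bcode n) (j : 'I_n) : \bar R :=
  (\esum_(y in [set: outs Y j]) (@joint R Y P n C j (~~ @ML_dec R Y P n C j y) y)%:E)%E.

(* Reveal the outputs of a uniformly random codeword X one coordinate at a
   time, the other coordinates being replaced by pure noise. By the chain rule
   the mutual information, at most H(X) = ln |C|, is the sum of the increments,
   and the increment at coordinate j is an average over the outputs already
   revealed of (s0 + s1) I(s0, s1), where (s0, s1) are the unnormalised
   posterior weights of X_j and I is the mutual information of one use of the
   channel. Superadditivity and homogeneity of (s0, s1) |-> (s0 + s1) I(s0, s1)
   give (s0 + s1) I(s0, s1) >= 2 min(s0, s1) C, and since revealing more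
   outputs can only decrease the MAP error, 2 C (P_e(1) + ... + P_e(n)) <= ln |C|,
   that is P_e <= R / (2 C) in bits. A countable output alphabet is reduced to
   a finite one by lumping all but finitely many output symbols together. *)

From HB Require Import structures.
From mathcomp Require Import all_boot all_order all_algebra.
From mathcomp Require Import all_classical all_reals all_analysis.
From mathcomp Require Import ring lra zify.
Import Order.TTheory GRing.Theory Num.Theory.
Set Implicit Arguments. Unset Strict Implicit. Unset Printing Implicit Defensive.
Local Open Scope ring_scope.

Section EntropyFunction.
Variable R : realType.
Implicit Types (a b m x : R).

Definition xlnx (x : R) := x * ln x.

Lemma xlnx1 : xlnx 1 = 0. Proof. by rewrite /xlnx ln1 mulr0. Qed.

Lemma xlnxM a b : 0 <= a -> 0 <= b -> xlnx (a * b) = a * xlnx b + b * xlnx a.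
Proof.
rewrite /xlnx le0r => /orP[/eqP->|a0]; first by rewrite !mul0r mulr0 addr0.
rewrite le0r => /orP[/eqP->|b0]; first by rewrite !(mulr0, mul0r) add0r.
by rewrite lnM ?posrE // mulrDr; ring.
Qed.

Lemma mul_ln_ratio_le a m : 0 <= a -> 0 < m -> a * (ln m - ln a) <= m - a.
Proof.
rewrite le0r => /orP[/eqP->|a0] m0; first by rewrite mul0r subr0 ltW.
have lnle : ln (m / a) <= m / a - 1.
  have ma_gt0 : 0 < m / a by rewrite divr_gt0.
  by have := @le_ln1Dx R (m / a - 1); rewrite [1 + _]addrC subrK; apply; lra.
rewrite ln_div ?posrE // in lnle.
have -> : m - a = a * (m / a - 1) by field; rewrite lt0r_neq0.
by rewrite ler_pM2l.
Qed.

Lemma log_sum_le (F : finType) (a c : F -> R) :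
  (forall f, 0 <= a f) -> (forall f, a f <= c f) ->
  \sum_f a f * (ln (c f) - ln (a f)) <=
  (\sum_f a f) * (ln (\sum_f c f) - ln (\sum_f a f)).
Proof.
move=> a_ge0 le_ac; set A := \sum_f a f; set C := \sum_f c f.
have : 0 <= A by apply: sumr_ge0 => f _.
rewrite le0r => /orP[/eqP A0|A_gt0].
  rewrite A0 mul0r big1 // => f _.
  by rewrite (psumr_eq0P (P := predT) (fun f _ => a_ge0 f) A0) // mul0r.
have C_gt0 : 0 < C by apply: (lt_le_trans A_gt0); apply: ler_sum => f _.
(* termwise Gibbs inequality against the rescaled weights c f * A / C *)
have term f : a f * (ln (c f) - ln (a f)) <=
              (c f * A / C - a f) + a f * (ln C - ln A).
  have [af0|af_gt0] := eqVneq (a f) 0.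
    have := le_ac f; rewrite af0 => cf_ge0.
    rewrite !mul0r subr0 addr0 divr_ge0 ?mulr_ge0 //; exact: ltW.
  have cf_gt0 : 0 < c f by apply: lt_le_trans (le_ac f); rewrite lt0r af_gt0 a_ge0.
  have r_gt0 : 0 < c f * A / C by rewrite divr_gt0 ?mulr_gt0.
  have := mul_ln_ratio_le (a_ge0 f) r_gt0.
  rewrite ln_div ?lnM ?posrE ?mulr_gt0 // => gibbs.
  have -> : a f * (ln (c f) - ln (a f)) =
    a f * (ln (c f) + ln A - ln C - ln (a f)) + a f * (ln C - ln A) by ring.
  by rewrite lerD2r.
apply: le_trans (_ : \sum_f ((c f * A / C - a f) + a f * (ln C - ln A)) <= _).
  by apply: ler_sum => f _.
rewrite big_split sumrB /= -!mulr_suml -/A -/C.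
by rewrite mulrAC divff ?mul1r ?subrr ?add0r // lt0r_neq0.
Qed.

Definition xlnx_gap (a b : R) := xlnx (a + b) - xlnx a - xlnx b.

Lemma xlnx_gap_sum_le (F : finType) (a b : F -> R) :
  (forall f, 0 <= a f) -> (forall f, 0 <= b f) ->
  \sum_f xlnx_gap (a f) (b f) <= xlnx_gap (\sum_f a f) (\sum_f b f).
Proof.
move=> a_ge0 b_ge0.
have gapE x y : xlnx_gap x y = x * (ln (x + y) - ln x) + y * (ln (x + y) - ln y).
  by rewrite /xlnx_gap /xlnx; ring.
rewrite gapE (eq_bigr _ (fun f _ => gapE (a f) (b f))) big_split /=.
apply: lerD.
  by have := log_sum_le a_ge0 (fun f => (ler_wpDr (b_ge0 f) (lexx (a f)))); rewrite big_split.
by have := log_sum_le b_ge0 (fun f => (ler_wpDl (a_ge0 f) (lexx (b f)))); rewrite big_split.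
Qed.

(* [info_term s0 s1 a b] is the contribution of one output symbol, with
   transition probabilities [a] and [b], to the mutual information (in nats)
   of the input weights [s0] and [s1]. *)
Definition info_term (s0 s1 a b : R) :=
  s0 * xlnx a + s1 * xlnx b - xlnx (s0 * a + s1 * b).

Lemma info_term_ge0 s0 s1 a b : 0 <= s0 -> 0 <= s1 -> s0 + s1 = 1 ->
  0 <= a -> 0 <= b -> 0 <= info_term s0 s1 a b.
Proof.
move=> s0_ge0 s1_ge0 s01 a_ge0 b_ge0; rewrite /info_term.
set m := s0 * a + s1 * b.
have [m0|m_gt0] := eqVneq m 0.
  have := mulr_ge0 s0_ge0 a_ge0; have := mulr_ge0 s1_ge0 b_ge0.
  move: m0; rewrite /m => m0 s1b_ge0 s0a_ge0.
  have s0a : s0 * a = 0 by lra.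
  have s1b : s1 * b = 0 by lra.
  by rewrite /xlnx m0 !mulrA s0a s1b !mul0r subr0 addr0.
have {}m_gt0 : 0 < m by rewrite lt0r m_gt0 addr_ge0 ?mulr_ge0.
have := mul_ln_ratio_le a_ge0 m_gt0 => /(ler_wpM2l s0_ge0) ha.
have := mul_ln_ratio_le b_ge0 m_gt0 => /(ler_wpM2l s1_ge0) hb.
have balance : s0 * (m - a) + s1 * (m - b) = 0.
  have -> : s0 * (m - a) + s1 * (m - b) = m * (s0 + s1) - m by rewrite /m; ring.
  by rewrite s01 mulr1 subrr.
have -> : xlnx m = s0 * (a * ln m) + s1 * (b * ln m) by rewrite /xlnx /m; ring.
rewrite /xlnx; lra.
Qed.

End EntropyFunction.

Section ChannelInformation.
Variables (R : realType) (F : finType) (P : bool -> F -> R).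
Hypothesis P_ge0 : forall b f, 0 <= P b f.
Hypothesis P_sum1 : forall b, \sum_f P b f = 1.

(* [chinfo s0 s1] is (s0 + s1) times the mutual information between the input
   and the output of [P] for the input distribution proportional to (s0, s1). *)
Definition chinfo (s0 s1 : R) :=
  \sum_f info_term s0 s1 (P false f) (P true f) + xlnx (s0 + s1).

Lemma sum_out_mass (s0 s1 : R) : \sum_f (s0 * P false f + s1 * P true f) = s0 + s1.
Proof. by rewrite big_split /= -!mulr_sumr !P_sum1 !mulr1. Qed.

Lemma chinfo_superadd (v0 v1 w0 w1 : R) :
  0 <= v0 -> 0 <= v1 -> 0 <= w0 -> 0 <= w1 ->
  chinfo v0 v1 + chinfo w0 w1 <= chinfo (v0 + w0) (v1 + w1).
Proof.
move=> v0_ge0 v1_ge0 w0_ge0 w1_ge0.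
have termD f : info_term (v0 + w0) (v1 + w1) (P false f) (P true f) =
    info_term v0 v1 (P false f) (P true f) + info_term w0 w1 (P false f) (P true f)
    - xlnx_gap (v0 * P false f + v1 * P true f) (w0 * P false f + w1 * P true f).
  rewrite /info_term /xlnx_gap.
  have -> : (v0 + w0) * P false f + (v1 + w1) * P true f =
            v0 * P false f + v1 * P true f + (w0 * P false f + w1 * P true f) by ring.
  ring.
have mass_ge0 s0 s1 f : 0 <= s0 -> 0 <= s1 -> 0 <= s0 * P false f + s1 * P true f.
  by move=> *; rewrite addr_ge0 ?mulr_ge0.
have gap_le := xlnx_gap_sum_le (fun f => mass_ge0 _ _ f v0_ge0 v1_ge0)
                               (fun f => mass_ge0 _ _ f w0_ge0 w1_ge0).
rewrite /= !sum_out_mass in gap_le.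
have total : xlnx (v0 + w0 + (v1 + w1)) =
    xlnx_gap (v0 + v1) (w0 + w1) + xlnx (v0 + v1) + xlnx (w0 + w1).
  by rewrite /xlnx_gap (_ : v0 + w0 + (v1 + w1) = v0 + v1 + (w0 + w1)); ring.
rewrite /chinfo (eq_bigr _ (fun f _ => termD f)) total.
rewrite [X in _ <= X + _]sumrB [X in _ <= X - _ + _]big_split /=.
lra.
Qed.

Lemma chinfoZ (c s0 s1 : R) : 0 <= c -> 0 <= s0 -> 0 <= s1 ->
  chinfo (c * s0) (c * s1) = c * chinfo s0 s1.
Proof.
move=> c_ge0 s0_ge0 s1_ge0.
have termZ f : info_term (c * s0) (c * s1) (P false f) (P true f) =
    c * info_term s0 s1 (P false f) (P true f)
    - (s0 * P false f + s1 * P true f) * xlnx c.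
  rewrite /info_term.
  have -> : c * s0 * P false f + c * s1 * P true f =
            c * (s0 * P false f + s1 * P true f) by ring.
  rewrite xlnxM ?addr_ge0 ?mulr_ge0 //; ring.
rewrite /chinfo (eq_bigr _ (fun f _ => termZ f)) sumrB -mulr_sumr -mulr_suml.
by rewrite sum_out_mass -mulrDr xlnxM ?addr_ge0 //; ring.
Qed.

Lemma chinfo0l (t : R) : 0 <= t -> chinfo 0 t = 0.
Proof.
move=> t_ge0.
have term f : info_term 0 t (P false f) (P true f) = - (P true f * xlnx t).
  by rewrite /info_term !mul0r !add0r xlnxM //; ring.
by rewrite /chinfo (eq_bigr _ (fun f _ => term f)) sumrN -mulr_suml P_sum1 add0r; ring.
Qed.

Lemma chinfo0r (t : R) : 0 <= t -> chinfo t 0 = 0.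
Proof.
move=> t_ge0.
have term f : info_term t 0 (P false f) (P true f) = - (P false f * xlnx t).
  by rewrite /info_term !mul0r !addr0 xlnxM //; ring.
by rewrite /chinfo (eq_bigr _ (fun f _ => term f)) sumrN -mulr_suml P_sum1 addr0; ring.
Qed.

(* Superadditivity and homogeneity reduce (s0, s1) to the diagonal point
   (min, min), where [chinfo] is proportional to the capacity. *)
Lemma chinfo_min (s0 s1 : R) : 0 <= s0 -> 0 <= s1 ->
  2 * Num.min s0 s1 * chinfo (1/2) (1/2) <= chinfo s0 s1.
Proof.
move=> s0_ge0 s1_ge0.
have diag s : 0 <= s -> chinfo s s = 2 * s * chinfo (1/2) (1/2).
  have half_ge0 : 0 <= 1/2 :> R by lra.
  by move=> s_ge0; rewrite -chinfoZ ?mulr_ge0 //; congr chinfo; field.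
case: (leP s0 s1) => [le01|/ltW le10].
  have d_ge0 : 0 <= s1 - s0 by rewrite subr_ge0.
  have := chinfo_superadd s0_ge0 s0_ge0 (lexx 0) d_ge0.
  by rewrite chinfo0l // !addr0 subrKC diag.
have d_ge0 : 0 <= s0 - s1 by rewrite subr_ge0.
have := chinfo_superadd s1_ge0 s1_ge0 d_ge0 (lexx 0).
by rewrite chinfo0r // !addr0 subrKC diag.
Qed.

Lemma chinfo_half :
  chinfo (1/2) (1/2) = \sum_f info_term (1/2) (1/2) (P false f) (P true f).
Proof. by rewrite /chinfo (_ : 1/2 + 1/2 = 1) ?xlnx1 ?addr0 //; field. Qed.

Lemma chinfo_half_ge0 : 0 <= chinfo (1/2) (1/2).
Proof.
rewrite chinfo_half; apply: sumr_ge0 => f _.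
by apply: info_term_ge0 => //; lra.
Qed.

End ChannelInformation.

Lemma sum_min_le (R : realDomainType) (I : finType) (a b : I -> R) :
  \sum_i Num.min (a i) (b i) <= Num.min (\sum_i a i) (\sum_i b i).
Proof.
by rewrite le_min; apply/andP; split; apply: ler_sum => i _; rewrite ge_min lexx ?orbT.
Qed.

Section CodeInformation.
Variables (R : realType) (F : finType) (P : bool -> F -> R).
Hypothesis P_ge0 : forall b f, 0 <= P b f.
Hypothesis P_sum1 : forall b, \sum_f P b f = 1.
Variables (n : nat) (mu : {ffun 'I_n -> bool} -> R).
Hypothesis mu_ge0 : forall x, 0 <= mu x.
Hypothesis mu_sum1 : \sum_x mu x = 1.

Local Notation word := {ffun 'I_n -> bool}.
Local Notation obs := {ffun 'I_n -> F}.
Implicit Types (A B : {set 'I_n}) (x : word) (y : obs) (j k : 'I_n).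

Lemma card_out_gt0 : (0 < #|F|)%N.
Proof.
case: (pickP (fun _ : F => true)) => [f _|F0]; first by apply/card_gt0P; exists f.
by have := P_sum1 false; rewrite big_pred0 // => /esym/eqP; rewrite oner_eq0.
Qed.

Definition unif (f : F) : R := #|F|%:R^-1.

Lemma unif_ge0 f : 0 <= unif f.
Proof. by rewrite invr_ge0 ler0n. Qed.

Lemma sum_unif : \sum_f unif f = 1.
Proof.
by rewrite sumr_const -[_ *+ _]mulr_natr mulVf // pnatr_eq0 -lt0n card_out_gt0.
Qed.

Definition set_coord y j (f : F) : obs := [ffun k => if k == j then f else y k].

Lemma sum_resample j (G : obs -> R) :
  \sum_y G y = \sum_(y : obs) unif (y j) * \sum_f G (set_coord y j f).
Proof.
pose swap (p : obs * F) := (set_coord p.1 j p.2, p.1 j).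
have swapK : involutive swap.
  case=> y f; rewrite /swap /= /set_coord ffunE eqxx; congr pair.
  by apply/ffunP => k; rewrite !ffunE; case: eqP => // ->.
have -> : \sum_(y : obs) unif (y j) * \sum_f G (set_coord y j f) =
          \sum_p (fun p => unif p.2 * G p.1) (swap p).
  rewrite -(pair_bigA _ (fun y f => unif (y j) * G (set_coord y j f))) /=.
  by apply: eq_bigr => y _; rewrite mulr_sumr.
rewrite -(reindex_inj (P := xpredT) (F := fun p => unif p.2 * G p.1) (inv_inj swapK)).
rewrite -(pair_bigA _ (fun y f => unif f * G y)) /=.
by apply: eq_bigr => y _; rewrite -mulr_suml sum_unif mul1r.
Qed.

(* [lik A x y] is the likelihood of [y] when the coordinates in [A] go through
   [P] and the others through the useless channel [unif], so that [y] always
   ranges over the whole of [obs]: [minfo A] is the mutual information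
   I(X; Y_A) in nats and [map_err j A] the error probability of the MAP
   estimate of X_j from Y_A, for X distributed according to [mu]. *)
Definition chan A k b f := if k \in A then P b f else unif f.
Definition lik A x y := \prod_k chan A k (x k) (y k).
Definition lik_off A j x y := \prod_(k | k != j) chan A k (x k) (y k).
Definition out_prob A y := \sum_x mu x * lik A x y.
Definition minfo A := \sum_y (\sum_x mu x * xlnx (lik A x y) - xlnx (out_prob A y)).
Definition bit_mass j b (w : word -> R) := \sum_(x : word | x j == b) mu x * w x.
Definition map_err j A :=
  \sum_y Num.min (bit_mass j false (lik A ^~ y)) (bit_mass j true (lik A ^~ y)).

Lemma chan_ge0 A k b f : 0 <= chan A k b f.
Proof. by rewrite /chan; case: ifP => _; [exact: P_ge0 | exact: unif_ge0]. Qed.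

Lemma lik_ge0 A x y : 0 <= lik A x y.
Proof. by apply: prodr_ge0 => k _; exact: chan_ge0. Qed.

Lemma lik_off_ge0 A j x y : 0 <= lik_off A j x y.
Proof. by apply: prodr_ge0 => k _; exact: chan_ge0. Qed.

Lemma bit_mass_ge0 j b (w : word -> R) : (forall x, 0 <= w x) -> 0 <= bit_mass j b w.
Proof. by move=> w_ge0; apply: sumr_ge0 => x _; rewrite mulr_ge0. Qed.

Lemma bit_mass_lik_off_ge0 A j k b y : 0 <= bit_mass j b (lik_off A k ^~ y).
Proof. by apply: bit_mass_ge0 => x; exact: lik_off_ge0. Qed.

Lemma lik_notin A j x y : j \notin A -> lik A x y = unif (y j) * lik_off A j x y.
Proof. by move=> /negbTE jA; rewrite /lik (bigD1 j) //= /chan jA. Qed.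

Lemma lik_setU1 A j x y f :
  lik (j |: A) x (set_coord y j f) = P (x j) f * lik_off A j x y.
Proof.
rewrite /lik (bigD1 j) //= /chan setU11 /set_coord ffunE eqxx; congr (_ * _).
by apply: eq_bigr => k kj; rewrite !inE ffunE (negbTE kj).
Qed.

Lemma sum_lik A x : \sum_y lik A x y = 1.
Proof.
rewrite /lik -(bigA_distr_bigA (fun k f => chan A k (x k) f)) /=.
by apply: big1 => k _; rewrite /chan; case: (k \in A); [exact: P_sum1 | exact: sum_unif].
Qed.

Lemma sum_bit_mass j (w : word -> R) (h : bool -> R) :
  \sum_x mu x * w x * h (x j) = bit_mass j false w * h false + bit_mass j true w * h true.
Proof.
rewrite (bigID (fun x => x j)) addrC /bit_mass !mulr_suml /=; congr (_ + _).
  by apply: eq_big => x; [rewrite eqb_id | move=> ->].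
by apply: eq_big => x; [rewrite eqbF_neg | move=> /negbTE ->].
Qed.

Lemma bit_massZ j b (c : R) (w : word -> R) :
  bit_mass j b (fun x => c * w x) = c * bit_mass j b w.
Proof. by rewrite /bit_mass mulr_sumr; apply: eq_bigr => x _; rewrite mulrCA. Qed.

Lemma bit_mass_notin A j k b y : k \notin A ->
  bit_mass j b (lik A ^~ y) = unif (y k) * bit_mass j b (lik_off A k ^~ y).
Proof.
by move=> kA; rewrite -bit_massZ; apply: eq_bigr => x _; rewrite (lik_notin _ _ kA) mulrCA.
Qed.

Lemma sum_bit_mass_setU1 A j k b y :
  \sum_f bit_mass j b (lik (k |: A) ^~ (set_coord y k f)) =
  bit_mass j b (lik_off A k ^~ y).
Proof.
rewrite /bit_mass exchange_big; apply: eq_bigr => x _.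
under eq_bigr do rewrite lik_setU1 mulrCA.
by rewrite -big_distrl /= P_sum1 mul1r.
Qed.

Lemma map_err_notin A j k : k \notin A ->
  map_err j A = \sum_(y : obs) unif (y k) *
    Num.min (bit_mass j false (lik_off A k ^~ y)) (bit_mass j true (lik_off A k ^~ y)).
Proof.
move=> kA; apply: eq_bigr => y _.
by rewrite minr_pMr ?unif_ge0 // !(bit_mass_notin _ _ _ kA).
Qed.

Lemma map_err_setU1_le A j k : map_err j (k |: A) <= map_err j A.
Proof.
have [kA|kA] := boolP (k \in A).
  by have -> : k |: A = A by apply/finset.setUidPr; rewrite finset.sub1set.
rewrite (map_err_notin j kA) /map_err (sum_resample k).
apply: ler_sum => y _; apply: ler_wpM2l; first exact: unif_ge0.
by rewrite -!(sum_bit_mass_setU1 A j k); apply: sum_min_le.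
Qed.

Lemma map_err_antitone A B j : A \subset B -> map_err j B <= map_err j A.
Proof.
move=> /finset.setUidPr <-; rewrite -[B]set_enum.
elim: (enum B) A => [|k s IHs] A.
  by have -> : A :|: [set x | x \in [::]] = A by apply/setP => i; rewrite !inE orbF.
suff -> : A :|: [set x | x \in k :: s] = (k |: A) :|: [set x | x \in s].
  exact: le_trans (IHs _) (map_err_setU1_le _ _ _).
by apply/setP => i; rewrite !inE orbA [(_ == _) || _]orbC.
Qed.

Local Notation off_mass A j y b := (bit_mass j b (lik_off A j ^~ y)).

Lemma sum_mu_lik_off A j y :
  \sum_x mu x * lik_off A j x y = off_mass A j y false + off_mass A j y true.
Proof.
have := sum_bit_mass j (lik_off A j ^~ y) (fun=> 1); rewrite /= !mulr1 => <-.
by apply: eq_bigr => x _; rewrite mulr1.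
Qed.

Lemma minfo_notin A j : j \notin A ->
  minfo A = \sum_(y : obs) unif (y j) * ((\sum_x mu x * xlnx (lik_off A j x y))
                 - xlnx (off_mass A j y false + off_mass A j y true)).
Proof.
move=> jA; apply: eq_bigr => y _.
have out_probE : out_prob A y = unif (y j) * (off_mass A j y false + off_mass A j y true).
  rewrite -sum_mu_lik_off mulr_sumr; apply: eq_bigr => x _.
  by rewrite (lik_notin _ _ jA) mulrCA.
have sum_xlnx : \sum_x mu x * xlnx (lik A x y) =
    unif (y j) * (\sum_x mu x * xlnx (lik_off A j x y))
    + xlnx (unif (y j)) * \sum_x mu x * lik_off A j x y.
  rewrite !mulr_sumr -big_split /=; apply: eq_bigr => x _.
  by rewrite (lik_notin _ _ jA) xlnxM ?unif_ge0 ?lik_off_ge0 //; ring.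
rewrite out_probE sum_xlnx xlnxM ?unif_ge0 ?addr_ge0 ?bit_mass_lik_off_ge0 //.
by rewrite sum_mu_lik_off; ring.
Qed.

Lemma minfo_setU1 A j :
  minfo (j |: A) = \sum_(y : obs) unif (y j) * ((\sum_x mu x * xlnx (lik_off A j x y))
     + off_mass A j y false * (\sum_f xlnx (P false f))
     + off_mass A j y true * (\sum_f xlnx (P true f))
     - \sum_f xlnx (off_mass A j y false * P false f + off_mass A j y true * P true f)).
Proof.
rewrite /minfo (sum_resample j); apply: eq_bigr => y _; congr (_ * _).
have out_probE f : out_prob (j |: A) (set_coord y j f) =
    off_mass A j y false * P false f + off_mass A j y true * P true f.
  rewrite /out_prob -(sum_bit_mass j (lik_off A j ^~ y) (fun b => P b f)).
  by apply: eq_bigr => x _; rewrite lik_setU1; ring.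
rewrite sumrB; under [X in _ - X]eq_bigr do rewrite out_probE.
congr (_ - _); rewrite exchange_big /=.
have inner x : \sum_f mu x * xlnx (lik (j |: A) x (set_coord y j f)) =
    mu x * xlnx (lik_off A j x y) + mu x * lik_off A j x y * \sum_f xlnx (P (x j) f).
  transitivity (\sum_f (mu x * xlnx (lik_off A j x y) * P (x j) f
                         + mu x * lik_off A j x y * xlnx (P (x j) f))).
    by apply: eq_bigr => f _; rewrite lik_setU1 xlnxM ?lik_off_ge0 //; ring.
  by rewrite big_split /= -!mulr_sumr P_sum1 mulr1.
rewrite (eq_bigr _ (fun x _ => inner x)) big_split /=.
by rewrite (sum_bit_mass j (lik_off A j ^~ y) (fun b => \sum_f xlnx (P b f))) addrA.
Qed.

Lemma minfo_setU1_sub A j : j \notin A ->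
  minfo (j |: A) - minfo A =
  \sum_(y : obs) unif (y j) * chinfo P (off_mass A j y false) (off_mass A j y true).
Proof.
move=> jA; rewrite minfo_setU1 (minfo_notin jA) -sumrB.
apply: eq_bigr => y _; rewrite -mulrBr /chinfo /info_term; congr (_ * _).
by rewrite sumrB big_split /= -!mulr_sumr; ring.
Qed.

Lemma minfo_step A j : j \notin A ->
  minfo A + 2 * chinfo P (1/2) (1/2) * map_err j A <= minfo (j |: A).
Proof.
move=> jA; rewrite -lerBrDl minfo_setU1_sub // (map_err_notin j jA) mulr_sumr.
apply: ler_sum => y _; rewrite mulrCA; apply: ler_wpM2l; first exact: unif_ge0.
by rewrite mulrAC; apply: chinfo_min => //; exact: bit_mass_lik_off_ge0.
Qed.

Lemma minfo0 : minfo finset.set0 = 0.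
Proof.
apply: big1 => y _.
have likE x : lik finset.set0 x y = \prod_k unif (y k).
  by apply: eq_bigr => k _; rewrite /chan inE.
rewrite /out_prob; under eq_bigr do rewrite likE.
under [X in _ - xlnx X]eq_bigr do rewrite likE.
by rewrite -!mulr_suml mu_sum1 !mul1r subrr.
Qed.

Lemma minfo_le_entropy A : minfo A <= - \sum_x xlnx (mu x).
Proof.
have minfoE : minfo A =
    \sum_y \sum_x mu x * lik A x y * (ln (lik A x y) - ln (out_prob A y)).
  apply: eq_bigr => y _.
  by rewrite /xlnx {2}/out_prob mulr_suml -sumrB; apply: eq_bigr => x _; ring.
rewrite minfoE.
apply: le_trans (_ : \sum_(y : obs) \sum_x mu x * lik A x y * - ln (mu x) <= _).
  apply: ler_sum => y _; apply: ler_sum => x _.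
  have [mu0|mu_neq0] := eqVneq (mu x) 0; first by rewrite mu0 !mul0r.
  have [lik0|lik_neq0] := eqVneq (lik A x y) 0; first by rewrite lik0 mulr0 !mul0r.
  have mu_gt0 : 0 < mu x by rewrite lt0r mu_neq0 mu_ge0.
  have lik_gt0 : 0 < lik A x y by rewrite lt0r lik_neq0 lik_ge0.
  apply: ler_wpM2l; first by rewrite mulr_ge0 ?ltW.
  have le_out : mu x * lik A x y <= out_prob A y.
    rewrite /out_prob (bigD1 x) //= lerDl; apply: sumr_ge0 => x' _.
    by rewrite mulr_ge0 ?lik_ge0.
  have := le_out; rewrite -ler_ln ?posrE ?(lt_le_trans _ le_out) ?mulr_gt0 //.
  rewrite lnM ?posrE //; lra.
rewrite exchange_big /= -sumrN; apply: ler_sum => x _.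
by rewrite -mulr_suml -mulr_sumr sum_lik mulr1 /xlnx mulrN.
Qed.

Lemma sum_map_err_le_minfo (s : seq 'I_n) : uniq s ->
  2 * chinfo P (1/2) (1/2) * \sum_(j <- s) map_err j [set~ j] <= minfo [set x in s].
Proof.
elim: s => [_|j s IHs /= /andP[js us]].
  rewrite big_nil mulr0 (_ : [set x : 'I_n in [::]] = finset.set0) ?minfo0 //.
have -> : [set x in j :: s] = j |: [set x in s] by apply/setP => i; rewrite !inE.
have jA : j \notin [set x in s] by rewrite inE.
apply: le_trans (minfo_step jA); rewrite big_cons mulrDr addrC lerD ?IHs //.
apply: ler_wpM2l; first by rewrite mulr_ge0 ?(chinfo_half_ge0 P_ge0).
apply: map_err_antitone; apply/fintype.subsetP => i; rewrite !inE => i_s.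
by apply: contraNneq js => <-.
Qed.

Lemma sum_map_err_le_entropy :
  2 * chinfo P (1/2) (1/2) * \sum_j map_err j [set~ j] <= - \sum_x xlnx (mu x).
Proof.
apply: le_trans (minfo_le_entropy [set x in enum 'I_n]).
by have := sum_map_err_le_minfo (enum_uniq 'I_n); rewrite big_enum.
Qed.

End CodeInformation.

Arguments unif {R F} f.

Section UniformCodeword.
Variables (R : realType) (n : nat) (C : bcode n).
Hypothesis C_neq0 : (0 < #|C|)%N.

Definition unif_code (x : {ffun 'I_n -> bool}) : R := if x \in C then #|C|%:R^-1 else 0.

Lemma unif_code_ge0 x : 0 <= unif_code x.
Proof. by rewrite /unif_code; case: ifP => // _; rewrite invr_ge0 ler0n. Qed.

Lemma unif_code_sum1 : \sum_x unif_code x = 1.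
Proof.
rewrite /unif_code -big_mkcond /= sumr_const -[_ *+ _]mulr_natr mulVf //.
by rewrite pnatr_eq0 -lt0n.
Qed.

Lemma entropy_unif_code : - \sum_x xlnx (unif_code x) = ln #|C|%:R.
Proof.
rewrite /unif_code; under eq_bigr do rewrite (fun_if (@xlnx R)) /xlnx mul0r.
rewrite -big_mkcond /= sumr_const lnV ?posrE ?ltr0n // mulrN -[_ *+ _]mulr_natr.
by rewrite mulNr opprK mulrAC mulVf ?mul1r // pnatr_eq0 -lt0n.
Qed.

End UniformCodeword.

Arguments unif_code {R n} C x.

Section OtherCoordinates.
Variables (R : realType) (F : finType) (n : nat) (j : 'I_n).

Definition restr (z : {ffun 'I_n -> F}) : {ffun others j -> F} := [ffun k => z (val k)].

Definition glue (f : F) (z : {ffun others j -> F}) : {ffun 'I_n -> F} :=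
  [ffun k => if insub k is Some k' then z k' else f].

Lemma glue_j f z : glue f z j = f.
Proof. by rewrite /glue ffunE insubF // eqxx. Qed.

Lemma glue_val f z (k : others j) : glue f z (val k) = z k.
Proof. by rewrite /glue ffunE valK. Qed.

Lemma glueK f : cancel (glue f) restr.
Proof. by move=> z; apply/ffunP => k; rewrite ffunE glue_val. Qed.

Lemma restrK (z : {ffun 'I_n -> F}) : glue (z j) (restr z) = z.
Proof.
apply/ffunP => k; rewrite /glue /restr !ffunE.
by case: insubP => [k' _ <-|]; [rewrite ffunE | rewrite negbK => /eqP ->].
Qed.

Lemma sum_glue (G : {ffun 'I_n -> F} -> R) :
  \sum_z G z = \sum_f \sum_(z : {ffun others j -> F}) G (glue f z).
Proof.
rewrite pair_bigA /= (reindex (fun p => glue p.1 p.2)) //=.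
exists (fun z : {ffun 'I_n -> F} => (z j, restr z)) => [[f z] _|z _] /=; last exact: restrK.
by rewrite glue_j glueK.
Qed.

Lemma prod_others (G : 'I_n -> R) :
  \prod_(k | k != j) G k = \prod_(k : others j) G (val k).
Proof. exact: (big_sub (predC1 j) G). Qed.

End OtherCoordinates.

Section FiniteChannelCode.
Variables (R : realType) (F : finType) (Q : bool -> F -> R).
Hypothesis Q_ge0 : forall b f, 0 <= Q b f.
Hypothesis Q_sum1 : forall b, \sum_f Q b f = 1.
Variables (n : nat) (C : bcode n).
Hypothesis C_neq0 : (0 < #|C|)%N.

Lemma bit_mass_unif_code (j : 'I_n) b (z : outs F j) :
  bit_mass (unif_code C) j b (fun x => \prod_(k : others j) Q (x (val k)) (z k)) =
  joint Q C b z.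
Proof.
rewrite /bit_mass /joint mulr_sumr big_mkcond [RHS]big_mkcond /=.
apply: eq_bigr => x _; rewrite /unif_code.
by case: (x \in C); case: (x j == b); rewrite ?mul0r.
Qed.

Lemma lik_glue (j : 'I_n) x f (z : outs F j) :
  lik Q [set~ j] x (glue f z) = unif f * \prod_(k : others j) Q (x (val k)) (z k).
Proof.
have jA : j \notin [set~ j] by rewrite !inE eqxx.
rewrite (lik_notin Q x _ jA) glue_j /lik_off prod_others; congr (_ * _).
by apply: eq_bigr => k _; rewrite /chan !inE (valP k) glue_val.
Qed.

Lemma map_err_code (j : 'I_n) :
  map_err Q (unif_code C) j [set~ j] =
  \sum_(z : outs F j) Num.min (joint Q C false z) (joint Q C true z).
Proof.
rewrite /map_err (sum_glue j) /=.
transitivity (\sum_(f : F) unif f *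
  \sum_(z : outs F j) Num.min (joint Q C false z) (joint Q C true z)).
  apply: eq_bigr => f _; rewrite mulr_sumr; apply: eq_bigr => z _.
  rewrite minr_pMr ?unif_ge0 // -!bit_mass_unif_code -!bit_massZ.
  by congr Num.min; apply: eq_bigr => x _; rewrite lik_glue.
by rewrite -mulr_suml (sum_unif Q_sum1) mul1r.
Qed.

Lemma finite_code_bound :
  2 * chinfo Q (1/2) (1/2) *
    \sum_j \sum_(z : outs F j) Num.min (joint Q C false z) (joint Q C true z)
  <= ln #|C|%:R.
Proof.
rewrite -(entropy_unif_code R C_neq0); under eq_bigr do rewrite -map_err_code.
by have := sum_map_err_le_entropy Q_ge0 Q_sum1 (unif_code_ge0 R C)
                                  (unif_code_sum1 R C_neq0).
Qed.

End FiniteChannelCode.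

Lemma sum_uniq_subset_le (R : numDomainType) (T : eqType) (r s : seq T) (h : T -> R) :
  uniq r -> uniq s -> {subset r <= s} -> (forall t, 0 <= h t) ->
  \sum_(t <- r) h t <= \sum_(t <- s) h t.
Proof.
move=> r_uniq s_uniq rs h_ge0.
have perm_r : perm_eq r [seq t <- s | t \in r].
  apply: uniq_perm => //; first exact: filter_uniq.
  by move=> t; rewrite mem_filter andb_idr //; apply: rs.
rewrite [X in _ <= X](bigID (mem r)) /= -[X in _ <= X + _]big_filter -(perm_big _ perm_r).
by rewrite lerDl sumr_ge0.
Qed.

Lemma sum_seq_sub (R : nmodType) (Y : choiceType) (s : seq Y) (h : Y -> R) :
  uniq s -> \sum_(w : seq_sub s) h (ssval w) = \sum_(y <- s) h y.
Proof.
move=> s_uniq; rewrite -(big_map (@ssval _ s) xpredT h).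
apply/perm_big/uniq_perm => [||y].
- by rewrite map_inj_uniq ?index_enum_uniq //; exact: val_inj.
- exact: s_uniq.
apply/mapP/idP => [[w _ ->]|ys]; first exact: ssvalP.
by exists (SeqSub ys) => //; rewrite mem_index_enum.
Qed.

Lemma sum_option (R : nmodType) (T : finType) (G : option T -> R) :
  \sum_o G o = G None + \sum_t G (Some t).
Proof.
rewrite (bigD1 None) //= (reindex_omap Some id) //=; last by case.
by congr (_ + _); apply: eq_bigl => t; rewrite eqxx.
Qed.

(* A partial sum, in nats, of the series defining [capacity]. *)
Definition partial_capacity (R : realType) (Y : Type) (P : bool -> Y -> R) (r : seq Y) :=
  \sum_(y <- r) info_term (1/2) (1/2) (P false y) (P true y).

Section LumpedChannel.
Variables (R : realType) (Y : countType) (P : bool -> Y -> R).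
Hypothesis P_ge0 : forall b y, 0 <= P b y.
Variable s : seq Y.
Hypothesis s_uniq : uniq s.
Hypothesis P_sum_le1 : forall b, \sum_(y <- s) P b y <= 1.

Definition lump b (o : option (seq_sub s)) : R :=
  if o is Some w then P b (ssval w) else 1 - \sum_(y <- s) P b y.

Lemma lump_ge0 b o : 0 <= lump b o.
Proof. by case: o => [w|] /=; rewrite ?subr_ge0. Qed.

Lemma lump_sum1 b : \sum_o lump b o = 1.
Proof. by rewrite sum_option /= (sum_seq_sub (P b)) // subrK. Qed.

Definition lift_obs n (j : 'I_n) (y : outs Y j) : outs (option (seq_sub s)) j :=
  [ffun k => insub (y k)].

Lemma joint_lift n (C : bcode n) (j : 'I_n) b (y : outs Y j) :
  (forall k, y k \in s) -> joint lump C b (lift_obs y) = joint P C b y.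
Proof.
move=> ys; congr (_ * _); apply: eq_bigr => x _; apply: eq_bigr => k _.
by rewrite ffunE (insubT (fun x => x \in s) (ys k)).
Qed.

Lemma lift_obs_inj n (j : 'I_n) (y y' : outs Y j) :
  (forall k, y k \in s) -> (forall k, y' k \in s) -> lift_obs y = lift_obs y' -> y = y'.
Proof.
move=> ys y's /ffunP eq_lift; apply/ffunP => k; have := eq_lift k.
by rewrite !ffunE (insubT (mem s : pred Y) (ys k)) (insubT (mem s : pred Y) (y's k)) => -[].
Qed.

Lemma chinfo_lump_ge (r : seq Y) : uniq r -> {subset r <= s} ->
  partial_capacity P r <= chinfo lump (1/2) (1/2).
Proof.
rewrite /partial_capacity => r_uniq rs; have half_ge0 : 0 <= 1/2 :> R by lra.
have term_ge0 a b : 0 <= a -> 0 <= b -> 0 <= info_term (1/2) (1/2) a b.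
  by move=> *; apply: info_term_ge0 => //; lra.
rewrite (chinfo_half lump) sum_option /=.
rewrite (sum_seq_sub (fun y => info_term _ _ (P false y) (P true y))) //.
rewrite addrC; apply: ler_wpDr; first by apply: term_ge0; rewrite subr_ge0.
by apply: sum_uniq_subset_le => // y; rewrite term_ge0.
Qed.

End LumpedChannel.

Local Open Scope classical_set_scope.
Local Open Scope ring_scope.

Lemma esum_gt_seq (R : realType) (T : choiceType) (h : T -> R) (B : R) :
  (B%:E < \esum_(t in [set: T]) (h t)%:E)%E ->
  exists2 S : seq T, uniq S & B < \sum_(t <- S) h t.
Proof.
move=> /ereal_sup_gt [_ [A [A_fin _] <-]].
rewrite fsumEFin // lte_fin fsbig_finite // => B_lt.
by exists (finmap.enum_fset (fset_set A)) => //; exact: finmap.fset_uniq.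
Qed.

Lemma lte_between_fin (R : realType) (a b : \bar R) : (a < b)%E ->
  exists r : R, (a < r%:E)%E /\ (r%:E < b)%E.
Proof.
case: a => [a| |]; case: b => [b| |] //= ab.
- by exists ((a + b) / 2); rewrite !lte_fin; move: ab; rewrite lte_fin; split; lra.
- by exists (a + 1); rewrite ltry lte_fin; split => //; lra.
- by exists (b - 1); rewrite ltNyr lte_fin; split => //; lra.
- by exists 0; rewrite ltNyr ltry.
Qed.

Lemma lt_limn_esup_near (R : realType) (u : (\bar R)^nat) (a : \bar R) :
  (limn_esup u < a)%E -> \forall i \near \oo, (u i < a)%E.
Proof.
rewrite /limn_esup /limf_esup => /ereal_inf_lt [_ [V V_near <-]] sup_lt.
apply: filterS V_near => i Vi; apply: le_lt_trans sup_lt.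
by apply: ereal_sup_ubound; exists i.
Qed.

Section CountableChannel.
Variables (R : realType) (Y : countType) (P : bool -> Y -> R).
Hypothesis P_ge0 : forall b y, 0 <= P b y.
Hypothesis P_esum1 : forall b, (\esum_(y in [set: Y]) (P b y)%:E = 1)%E.

Lemma sum_seq_le1 (s : seq Y) b : uniq s -> \sum_(y <- s) P b y <= 1.
Proof.
move=> s_uniq; rewrite -lee_fin -sumEFin fsbig_seq // -(P_esum1 b).
by apply: ereal_sup_ubound; exists [set` s] => //; split; [exact: finite_seq | done].
Qed.

Lemma sum_min_joint_le n (C : bcode n) (X0 : seq Y) (S : forall j : 'I_n, seq (outs Y j)) :
  (0 < #|C|)%N -> uniq X0 -> (forall j, uniq (S j)) ->
  2 * partial_capacity P X0 *
    \sum_j \sum_(z <- S j) Num.min (joint P C false z) (joint P C true z)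
  <= ln #|C|%:R.
Proof.
move=> C_neq0 X0_uniq S_uniq.
pose s := undup (X0 ++ flatten [seq flatten [seq codom (z : outs Y j) | z <- S j]
                                | j <- enum 'I_n]).
have s_uniq : uniq s := undup_uniq _.
have X0_s : {subset X0 <= s} by move=> y y_X0; rewrite mem_undup mem_cat y_X0.
have S_s j (z : outs Y j) k : z \in S j -> z k \in s.
  move=> zS; rewrite mem_undup mem_cat; apply/orP; right.
  apply/flattenP; exists (flatten [seq codom (z : outs Y j) | z <- S j]).
    by apply/mapP; exists j; rewrite ?mem_enum.
  by apply/flattenP; exists (codom z); [apply/mapP; exists z | exact: codom_f].
have s_le1 b := sum_seq_le1 b s_uniq.
pose Q := @lump R Y P s.
apply: le_trans (finite_code_bound (lump_ge0 P_ge0 s_le1) (lump_sum1 P s_uniq) C_neq0).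
have half_ge0 : 0 <= 1/2 :> R by lra.
have min_joint_ge0 (F : countType) (Q' : bool -> F -> R) (j : 'I_n) (z : outs F j) :
    (forall b f, 0 <= Q' b f) -> 0 <= Num.min (joint Q' C false z) (joint Q' C true z).
  move=> Q'_ge0; rewrite le_min; apply/andP; split;
  by apply: mulr_ge0; [rewrite invr_ge0 | apply: sumr_ge0 => x _; apply: prodr_ge0].
apply: ler_pM.
- rewrite mulr_ge0 // /partial_capacity sumr_ge0 // => y _.
  by apply: info_term_ge0; rewrite ?P_ge0 //; lra.
- by apply: sumr_ge0 => j _; apply: sumr_ge0 => z _; apply: min_joint_ge0.
- by rewrite ler_wpM2l // chinfo_lump_ge.
apply: ler_sum => j _.
rewrite (eq_big_seq (fun z => Num.min (joint Q C false (lift_obs s z))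
                                      (joint Q C true (lift_obs s z)))); last first.
  by move=> z zS; rewrite !joint_lift // => k; exact: S_s zS.
rewrite -(big_map (@lift_obs Y s n j) xpredT
                  (fun z => Num.min (joint Q C false z) (joint Q C true z))).
apply: sum_uniq_subset_le => [||z _|z]; rewrite ?index_enum_uniq ?mem_index_enum //.
- rewrite map_inj_in_uniq // => z z' zS z'S; apply: lift_obs_inj => k.
  + exact: S_s zS.
  + exact: S_s z'S.
- by apply: min_joint_ge0; exact: lump_ge0.
Qed.

End CountableChannel.

Lemma marg_half (R : realType) n (C : bcode n) (j : 'I_n) b :
  (0 < #|C|)%N -> (#|[set x in C | x j]| * 2 = #|C|)%N -> @marg R n C j b = 1/2.
Proof.
move=> C_neq0 unif_j.
have card_j : #|[set x in C | x j == b]| = #|[set x in C | x j]|.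
  case: b; first by apply: eq_card => x; rewrite !inE eqb_id.
  have := cardsID [set x : {ffun 'I_n -> bool} | x j] C.
  rewrite -[X in _ = X -> _]unif_j.
  have -> : C :&: [set x : {ffun 'I_n -> bool} | x j] = [set x in C | x j].
    by apply/setP => x; rewrite !inE.
  have -> : C :\: [set x : {ffun 'I_n -> bool} | x j] = [set x in C | x j == false].
    by apply/setP => x; rewrite !inE eqbF_neg andbC.
  by rewrite muln2 -addnn => /addnI.
have t_gt0 : (0 < #|[set x in C | x j]|)%N by lia.
rewrite /marg card_j -unif_j natrM; field.
by rewrite pnatr_eq0 -lt0n.
Qed.

Section ErrorProbability.
Variables (R : realType) (Y : countType) (P : bool -> Y -> R).
Hypothesis P_ge0 : forall b y, 0 <= P b y.
Hypothesis P_esum1 : forall b, (\esum_(y in [set: Y]) (P b y)%:E = 1)%E.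
Variables (n : nat) (C : bcode n).
Hypothesis C_neq0 : (0 < #|C|)%N.
Hypothesis C_unif : unif_marginals C.

(* With uniform marginals the ML decoder is the MAP decoder, whose error
   probability is the mass of the smaller posterior. *)
Lemma Pe_min j : Pe P C j =
  (\esum_(y in [set: outs Y j]) (Num.min (joint P C false y) (joint P C true y))%:E)%E.
Proof.
apply: eq_esum => y _; congr EFin.
by rewrite /ML_dec !marg_half // ltr_pM2r ?divr_gt0 // minElt; case: ifP.
Qed.

Lemma Pe_le_ln_card (X0 : seq Y) :
  (0 < n)%N -> (forall j j', Pe P C j = Pe P C j') -> uniq X0 ->
  0 < partial_capacity P X0 ->
  forall j, (Pe P C j <= (ln #|C|%:R / (2 * partial_capacity P X0 * n%:R))%:E)%E.
Proof.
move=> n_gt0 Pe_eq X0_uniq; set I := partial_capacity P X0 => I_gt0 j0.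
set B := ln #|C|%:R / (2 * I * n%:R).
rewrite leNgt; apply/negP => B_lt.
have S_ex j : exists2 S : seq (outs Y j), uniq S &
    B < \sum_(z <- S) Num.min (joint P C false z) (joint P C true z).
  by apply: esum_gt_seq; rewrite -Pe_min (Pe_eq j j0).
have [S S_uniq S_gt] : exists2 S : forall j, seq (outs Y j), (forall j, uniq (S j)) &
    forall j, B < \sum_(z <- S j) Num.min (joint P C false z) (joint P C true z).
  by exists (fun j => sval (cid2 (S_ex j))) => j; case: (svalP (cid2 (S_ex j))).
have := sum_min_joint_le P_ge0 P_esum1 C_neq0 X0_uniq S_uniq.
apply/negP; rewrite -ltNge.
have -> : ln #|C|%:R = 2 * I * (\sum_(j : 'I_n) B).
  rewrite sumr_const card_ord -[_ *+ n]mulr_natr /B; field.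
  by rewrite pnatr_eq0 -lt0n n_gt0 lt0r_neq0.
rewrite ltr_pM2l ?mulr_gt0 //; apply: ltr_sum => [|j _]; last exact: S_gt.
by apply/hasP; exists (Ordinal n_gt0); rewrite ?mem_index_enum.
Qed.

End ErrorProbability.

Lemma rate_ge0 (R : realType) n (C : bcode n) : (0 < #|C|)%N -> 0 <= @rate R n C.
Proof.
by move=> C_neq0; rewrite /rate /log2 !divr_ge0 ?ler0n // ?ln_ge0 ?ler1n.
Qed.

Lemma capacity_termE (R : realType) (Y : Type) (P : bool -> Y -> R) (y : Y) :
  0 <= P false y -> 0 <= P true y ->
  (1/2) * \sum_(x : bool) P x y * log2 (P x y / (P false y / 2 + P true y / 2)) =
  info_term (1/2) (1/2) (P false y) (P true y) / ln 2.
Proof.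
rewrite big_bool /= /log2 /info_term; set a := P false y; set b := P true y => a_ge0 b_ge0.
set m := a / 2 + b / 2.
have mul_ln_div p : 0 <= p -> p <= 2 * m -> p * ln (p / m) = xlnx p - p * ln m.
  rewrite le0r => /orP[/eqP->|p_gt0 le_pm]; first by rewrite !mul0r /xlnx mul0r subr0.
  by rewrite ln_div ?posrE // /xlnx; [ring | lra].
have le_a : a <= 2 * m by rewrite /m; lra.
have le_b : b <= 2 * m by rewrite /m; lra.
rewrite !mulrA !mul_ln_div // /m.
have -> : 1 / 2 * a + 1 / 2 * b = a / 2 + b / 2 by field.
rewrite /xlnx; field.
by rewrite lt0r_neq0 // ln_gt0 //; lra.
Qed.

Unset Implicit Arguments.

Theorem lemma2 (R : realType) (Y : countType) (P : bool -> Y -> R)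
  (sigma : Y -> Y) (n : nat -> nat) (C : forall i, bcode (n i)) :
  is_BMS P sigma ->
  (forall i, (0 < n i)%N) ->
  (forall i, (0 < #|C i|)%N) ->
  (limn_esup (fun i => (@rate R (n i) (C i))%:E) < @capacity R Y P)%E ->
  (forall i, @unif_marginals (n i) (C i)) ->
  (forall i (j j' : 'I_(n i)), @Pe R Y P (n i) (C i) j = @Pe R Y P (n i) (C i) j') ->
  exists c : R, 0 < c /\
    \forall i \near \oo, forall j : 'I_(n i), (@Pe R Y P (n i) (C i) j < (1/2 - c)%:E)%E.
Proof.
move=> [P_ge0 [P_esum1 _]] n_gt0 C_neq0 rate_lt_cap C_unif Pe_eq.
have [r [rate_lt_r r_lt_cap]] := lte_between_fin rate_lt_cap.
have [X0 X0_uniq] := esum_gt_seq r_lt_cap; set C0 := \sum_(y <- X0) _ => r_lt_C0.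
have ln2_gt0 : 0 < ln (2 : R) by rewrite ln_gt0 //; lra.
have C0E : partial_capacity P X0 = C0 * ln 2.
  rewrite /C0 /partial_capacity mulr_suml; apply: eq_bigr => y _.
  by rewrite capacity_termE ?divfK ?lt0r_neq0.
have rate_near := lt_limn_esup_near rate_lt_r.
have [i0 rate_i0] := filter_ex rate_near.
have C0_gt0 : 0 < C0.
  by move: rate_i0; rewrite lte_fin; have := rate_ge0 R (C_neq0 i0); lra.
exists ((C0 - r) / (2 * C0)); split; first by rewrite divr_gt0 ?subr_gt0 ?mulr_gt0.
apply: filterS rate_near => i; rewrite lte_fin => rate_i j.
have := Pe_le_ln_card P_ge0 P_esum1 (C_neq0 i) (C_unif i) (n_gt0 i) (Pe_eq i) X0_uniq.
rewrite C0E => /(_ (mulr_gt0 C0_gt0 ln2_gt0) j) /le_lt_trans; apply; rewrite lte_fin.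
have -> : 1/2 - (C0 - r) / (2 * C0) = r / (2 * C0) by field; rewrite lt0r_neq0.
have -> : ln #|C i|%:R / (2 * (C0 * ln 2) * (n i)%:R) = rate (C i) / (2 * C0).
  by rewrite /rate /log2; field; rewrite !lt0r_neq0 ?ltr0n.
by rewrite ltr_pM2r ?invr_gt0 ?mulr_gt0.
Qed.
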